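(* Let $L_1,\ldots,L_r$ be real linear forms in $n$ variables, $L_i(\mathbf x)=\sum_{j\le n}\lambda_{i,j}x_j$, such that for every $\boldsymbol\alpha\in\mathbb{R}^r\setminus\{\mathbf0\}$ the form $\boldsymbol\alpha\cdot\mathbf L$ does not have all coefficients rational. Let $\Lambda$ be the $n\times r$ matrix with $(j,i)$ entry $\lambda_{i,j}$. For $\boldsymbol\alpha\in\mathbb{R}^r$ and $P\ge1$ let \[ \mathcal F(\boldsymbol\alpha;P)=\sup_{q\in\mathbb N,\ \mathbf a\in\mathbb{Z}^n}\ \prod_{v\le n}\big(q+P|q\lambda_v-a_v|\big)^{-1},\qquad\text{where }\boldsymbol\lambda=\Lambda\boldsymbol\alpha . \] Then for any $0<V\le W$, \[ \sup_{V\le|\Lambda\boldsymbol\alpha|\le W}\mathcal F(\boldsymbol\alpha;P)\to0\qquad(P\to\infty). \]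
   Context: $|\mathbf y|=\max_i|y_i|$ for vectors. *)

(* Stdlib Reals. Vectors in R^k are functions nat -> R, only indices < k matter. *)
From Stdlib Require Import Reals ZArith.
Open Scope R_scope.

Fixpoint sumR (k : nat) (f : nat -> R) : R :=
  match k with O => 0 | S k' => sumR k' f + f k' end.

Fixpoint prodR (k : nat) (f : nat -> R) : R :=
  match k with O => 1 | S k' => prodR k' f * f k' end.

Fixpoint supnorm (k : nat) (y : nat -> R) : R :=
  match k with O => 0 | S k' => Rmax (supnorm k' y) (Rabs (y k')) end.

Definition is_rational (x : R) : Prop :=
  exists p d : Z, d <> 0%Z /\ x = IZR p / IZR d.

(* lam i j = lambda_{i,j}, i < r, j < n.  (Lambda alpha)_j = sum_{i<r} lambda_{i,j} alpha_i,
   which is also the j-th coefficient of the form alpha . L. *)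
Definition LamMul (r : nat) (lam : nat -> nat -> R) (alpha : nat -> R) : nat -> R :=
  fun j => sumR r (fun i => lam i j * alpha i).

Definition Fterm (n r : nat) (lam : nat -> nat -> R) (alpha : nat -> R) (P : R)
  (q : nat) (a : nat -> Z) : R :=
  prodR n (fun v => / (INR q + P * Rabs (INR q * LamMul r lam alpha v - IZR (a v)))).

(* "F(alpha;P) <= c", i.e. c bounds the supremum over q in N (q >= 1) and a in Z^n *)
Definition F_le (n r : nat) (lam : nat -> nat -> R) (alpha : nat -> R) (P c : R) : Prop :=
  forall (q : nat) (a : nat -> Z), (1 <= q)%nat -> Fterm n r lam alpha P q a <= c.

From Stdlib Require Import Reals ZArith Lra Lia Classical ClassicalEpsilon.
Open Scope R_scope.

(* Every factor of the product is at most 1/q, so only q <= Q matter once 1/Q < eps.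
   For a fixed q the distance from q (Lambda alpha) to Z^n is bounded below by some
   d_q > 0 on the shell V <= |Lambda alpha| <= W.  Indeed, the hypothesis makes Lambda
   injective, hence |Lambda alpha| >= c |alpha| by compactness of the unit sphere, so the
   shell is bounded in alpha; a sequence on it with distances tending to 0 would have a
   limit beta <> 0 with q (Lambda beta) integral, i.e. beta . L rational.  Once
   P d >= 1/eps, the factor at a coordinate where the distance is at least d is at most
   eps. *)

Lemma Un_cv_const c : Un_cv (fun _ => c) c.
Proof.
  intros e He; exists 0%nat; intros k _.
  unfold Rdist; rewrite Rminus_diag, Rabs_R0; lra.
Qed.

Lemma Un_cv_ext (u w : nat -> R) l : (forall k, u k = w k) -> Un_cv u l -> Un_cv w l.
Proof.
  intros Huw Hu e He; destruct (Hu e He) as [N HN].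
  exists N; intros k Hk; rewrite <- Huw; auto.
Qed.

Lemma Un_cv_subseq (u : nat -> R) l (phi : nat -> nat) :
  (forall k, (k <= phi k)%nat) -> Un_cv u l -> Un_cv (fun k => u (phi k)) l.
Proof.
  intros Hphi Hu e He; destruct (Hu e He) as [N HN].
  exists N; intros k Hk; apply HN; specialize (Hphi k); lia.
Qed.

Lemma inv_succ_eventually_lt e :
  0 < e -> exists N : nat, forall k, (N <= k)%nat -> / (INR k + 1) < e.
Proof.
  intros He; destruct (archimed_cor1 e He) as [N [HN HN0]].
  exists N; intros k Hk.
  apply Rle_lt_trans with (/ INR N); [|exact HN].
  apply Rinv_le_contravar; [apply lt_0_INR; lia|].
  apply le_INR in Hk; lra.
Qed.

Lemma Un_cv_dominated_inv_succ (u : nat -> R) :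
  (forall k, Rabs (u k) <= / (INR k + 1)) -> Un_cv u 0.
Proof.
  intros Hu e He; destruct (inv_succ_eventually_lt e He) as [N HN].
  exists N; intros k Hk; unfold Rdist; rewrite Rminus_0_r.
  eapply Rle_lt_trans; [apply Hu | apply HN; exact Hk].
Qed.

Lemma Un_cv_IZR_integer (z : nat -> Z) l :
  Un_cv (fun k => IZR (z k)) l -> exists m, l = IZR m.
Proof.
  intros Hz; destruct (Hz (/ 2)) as [N HN]; [lra|].
  assert (Hconst : forall k, (N <= k)%nat -> z k = z N).
  { intros k Hk.
    pose proof (HN k Hk) as Hk'; pose proof (HN N (le_n N)) as HN'.
    unfold Rdist in Hk', HN'; apply Rabs_def2 in Hk'; apply Rabs_def2 in HN'.
    assert (IZR (z k - z N) < 1 /\ -1 < IZR (z k - z N)) as [Hlt Hgt]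
      by (rewrite minus_IZR; lra).
    apply lt_IZR in Hlt; apply lt_IZR in Hgt; lia. }
  exists (z N).
  apply (UL_sequence (fun k => IZR (z (k + N)%nat))).
  - apply (Un_cv_subseq (fun k => IZR (z k))); [intro; lia | exact Hz].
  - apply (Un_cv_ext (fun _ => IZR (z N))); [|apply Un_cv_const].
    intro k; rewrite (Hconst (k + N)%nat); [reflexivity | lia].
Qed.

Lemma eventually_forall_finite (n : nat) (P : nat -> nat -> Prop) :
  (forall v, (v < n)%nat -> exists N, forall k, (N <= k)%nat -> P v k) ->
  exists N, forall k, (N <= k)%nat -> forall v, (v < n)%nat -> P v k.
Proof.
  induction n as [|n IH]; intros HP.
  - exists 0%nat; intros; lia.
  - destruct IH as [N1 HN1]; [intros v Hv; apply HP; lia|].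
    destruct (HP n) as [N2 HN2]; [lia|].
    exists (N1 + N2)%nat; intros k Hk v Hv.
    destruct (Nat.eq_dec v n) as [->|Hne]; [apply HN2 | apply HN1]; lia.
Qed.

Lemma bounded_subseq_cv (t : nat -> R) M :
  (forall k, Rabs (t k) <= M) ->
  exists phi : nat -> nat, (forall k, (k <= phi k)%nat) /\
    exists l, Un_cv (fun k => t (phi k)) l.
Proof.
  intros HM.
  destruct (Bolzano_Weierstrass t (fun c => -M <= c <= M) (compact_P3 (-M) M))
    as [l Hl].
  { intro k; specialize (HM k).
    pose proof (Rle_abs (t k)); pose proof (Rle_abs (- t k)).
    rewrite Rabs_Ropp in *; lra. }
  assert (Hnear : forall k, exists p, (k <= p)%nat /\ Rabs (t p - l) < / (INR k + 1)).
  { intro k.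
    assert (Hpos : 0 < / (INR k + 1))
      by (apply Rinv_0_lt_compat; pose proof (pos_INR k); lra).
    destruct (Hl (disc l (mkposreal _ Hpos)) k) as [p Hp];
      [exists (mkposreal _ Hpos); intros x Hx; exact Hx|].
    exists p; exact Hp. }
  destruct (choice _ Hnear) as [phi Hphi].
  exists phi; split; [intro k; apply Hphi|].
  exists l; intros e He; destruct (inv_succ_eventually_lt e He) as [N HN].
  exists N; intros k Hk; unfold Rdist.
  destruct (Hphi k) as [_ Hk']; specialize (HN k Hk); lra.
Qed.

Lemma supnorm_ge_abs n y v : (v < n)%nat -> Rabs (y v) <= supnorm n y.
Proof.
  induction n as [|n IH]; intros Hv; simpl; [lia|].
  destruct (Nat.eq_dec v n) as [->|Hne]; [apply Rmax_r|].
  eapply Rle_trans; [apply IH; lia | apply Rmax_l].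
Qed.

Lemma supnorm_nonneg n y : 0 <= supnorm n y.
Proof.
  induction n as [|n IH]; simpl; [lra|].
  eapply Rle_trans; [exact IH | apply Rmax_l].
Qed.

Lemma supnorm_lub n y M :
  0 <= M -> (forall v, (v < n)%nat -> Rabs (y v) <= M) -> supnorm n y <= M.
Proof.
  induction n as [|n IH]; intros HM Hy; simpl; [exact HM|].
  apply Rmax_lub; [apply IH; auto | apply Hy; lia].
Qed.

Lemma supnorm_lt n y e :
  0 < e -> (forall v, (v < n)%nat -> Rabs (y v) < e) -> supnorm n y < e.
Proof.
  induction n as [|n IH]; intros He Hy; simpl; [exact He|].
  apply Rmax_lub_lt; [apply IH; auto | apply Hy; lia].
Qed.

Lemma supnorm_witness n y d :
  0 < d -> d <= supnorm n y -> exists v, (v < n)%nat /\ d <= Rabs (y v).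
Proof.
  intros Hd Hdy; apply NNPP; intro Hno.
  assert (supnorm n y < d); [|lra].
  apply supnorm_lt; [exact Hd|]; intros v Hv.
  apply Rnot_le_lt; intro Hle; apply Hno; exists v; auto.
Qed.

Lemma supnorm_scal n c y :
  supnorm n (fun v => c * y v) = Rabs c * supnorm n y.
Proof.
  induction n as [|n IH]; simpl; [ring|].
  rewrite IH, Rabs_mult, RmaxRmult; [reflexivity | apply Rabs_pos].
Qed.

Lemma supnorm_le_perturb n y z e :
  0 <= e -> (forall v, (v < n)%nat -> Rabs (y v - z v) <= e) ->
  supnorm n y <= supnorm n z + e.
Proof.
  intros He Hyz; apply supnorm_lub.
  - pose proof (supnorm_nonneg n z); lra.
  - intros v Hv.
    replace (y v) with (z v + (y v - z v)) by ring.
    eapply Rle_trans; [apply Rabs_triang|].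
    apply Rplus_le_compat; [apply supnorm_ge_abs | apply Hyz]; exact Hv.
Qed.

Lemma supnorm_cv n (y : nat -> nat -> R) z :
  (forall v, (v < n)%nat -> Un_cv (fun k => y k v) (z v)) ->
  Un_cv (fun k => supnorm n (y k)) (supnorm n z).
Proof.
  intros Hy e He.
  destruct (eventually_forall_finite n (fun v k => Rabs (y k v - z v) < e / 2))
    as [N HN].
  { intros v Hv; apply (Hy v Hv (e / 2)); lra. }
  exists N; intros k Hk; unfold Rdist.
  assert (Hclose : forall v, (v < n)%nat -> Rabs (y k v - z v) <= e / 2)
    by (intros v Hv; apply Rlt_le, HN; auto).
  pose proof (supnorm_le_perturb n (y k) z (e / 2) ltac:(lra) Hclose).
  assert (Hclose' : forall v, (v < n)%nat -> Rabs (z v - y k v) <= e / 2)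
    by (intros v Hv; rewrite Rabs_minus_sym; apply Hclose; exact Hv).
  pose proof (supnorm_le_perturb n z (y k) (e / 2) ltac:(lra) Hclose').
  apply Rabs_def1; lra.
Qed.

Lemma bounded_vec_subseq (m : nat) (u : nat -> nat -> R) M :
  (forall k, supnorm m (u k) <= M) ->
  exists phi : nat -> nat, (forall k, (k <= phi k)%nat) /\ exists y : nat -> R,
    forall v, (v < m)%nat -> Un_cv (fun k => u (phi k) v) (y v).
Proof.
  induction m as [|m IH]; intros HM.
  - exists (fun k => k); split; [intro; lia|].
    exists (fun _ => 0); intros; lia.
  - destruct IH as [phi [Hphi [y Hy]]].
    { intro k; eapply Rle_trans; [apply Rmax_l | apply HM]. }
    destruct (bounded_subseq_cv (fun k => u (phi k) m) M) as [psi [Hpsi [l Hl]]].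
    { intro k; eapply Rle_trans; [apply Rmax_r | apply HM]. }
    exists (fun k => phi (psi k)); split.
    + intro k; specialize (Hphi (psi k)); specialize (Hpsi k); lia.
    + exists (fun v => if Nat.eq_dec v m then l else y v); intros v Hv.
      destruct (Nat.eq_dec v m) as [->|Hne]; [exact Hl|].
      apply (Un_cv_subseq (fun k => u (phi k) v)); [exact Hpsi | apply Hy; lia].
Qed.

Lemma LamMul_scal r lam c alpha j :
  LamMul r lam (fun i => c * alpha i) j = c * LamMul r lam alpha j.
Proof.
  unfold LamMul; induction r as [|r IH]; simpl; [ring|].
  rewrite IH; ring.
Qed.

Lemma LamMul_zero r lam alpha j :
  (forall i, (i < r)%nat -> alpha i = 0) -> LamMul r lam alpha j = 0.
Proof.
  unfold LamMul; induction r as [|r IH]; intros H0; simpl; [reflexivity|].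
  rewrite IH, (H0 r); [ring | lia | intros i Hi; apply H0; lia].
Qed.

Lemma LamMul_cv r lam (alpha : nat -> nat -> R) beta j :
  (forall i, (i < r)%nat -> Un_cv (fun k => alpha k i) (beta i)) ->
  Un_cv (fun k => LamMul r lam (alpha k) j) (LamMul r lam beta j).
Proof.
  unfold LamMul; induction r as [|r IH]; intros Hcv; simpl.
  - apply Un_cv_const.
  - apply CV_plus; [apply IH; intros i Hi; apply Hcv; lia|].
    apply (CV_mult (fun _ => lam r j)); [apply Un_cv_const | apply Hcv; lia].
Qed.

Section IrrationalForms.

Variables (n r : nat) (lam : nat -> nat -> R).

Hypothesis Hirr : forall alpha : nat -> R,
  (exists i, (i < r)%nat /\ alpha i <> 0) ->
  ~ (forall j, (j < n)%nat -> is_rational (LamMul r lam alpha j)).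

Lemma LamMul_kernel_trivial alpha :
  (forall j, (j < n)%nat -> LamMul r lam alpha j = 0) ->
  forall i, (i < r)%nat -> alpha i = 0.
Proof.
  intros Hker i Hi; apply NNPP; intro Hai.
  apply (Hirr alpha); [exists i; auto|].
  intros j Hj; exists 0%Z, 1%Z; split; [lia|].
  rewrite Hker by exact Hj; field.
Qed.

Lemma LamMul_coercive :
  exists c, 0 < c /\ forall alpha, c * supnorm r alpha <= supnorm n (LamMul r lam alpha).
Proof.
  apply NNPP; intro Hno.
  assert (Hbad : forall k, exists alpha,
    supnorm n (LamMul r lam alpha) < / (INR k + 1) * supnorm r alpha).
  { intro k; apply NNPP; intro Hk; apply Hno.
    exists (/ (INR k + 1)); split;
      [apply Rinv_0_lt_compat; pose proof (pos_INR k); lra|].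
    intro alpha; apply Rnot_lt_le; intro Hlt; apply Hk; exists alpha; exact Hlt. }
  destruct (choice _ Hbad) as [alpha Halpha].
  set (m k := supnorm r (alpha k)).
  assert (Hm : forall k, 0 < m k).
  { intro k; specialize (Halpha k).
    pose proof (supnorm_nonneg n (LamMul r lam (alpha k))).
    assert (0 < / (INR k + 1)) by (apply Rinv_0_lt_compat; pose proof (pos_INR k); lra).
    apply Rnot_le_lt; intro Hle.
    pose proof (Rmult_le_compat_l (/ (INR k + 1)) (m k) 0 ltac:(lra) Hle).
    rewrite Rmult_0_r in *; unfold m in *; lra. }
  set (beta k i := / m k * alpha k i).
  assert (Hbeta1 : forall k, supnorm r (beta k) = 1).
  { intro k; unfold beta; rewrite supnorm_scal, Rabs_pos_eq.
    - fold (m k); field; apply Rgt_not_eq, Hm.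
    - apply Rlt_le, Rinv_0_lt_compat, Hm. }
  assert (Hsmall : forall k j, (j < n)%nat ->
    Rabs (LamMul r lam (beta k) j) <= / (INR k + 1)).
  { intros k j Hj; unfold beta; rewrite LamMul_scal, Rabs_mult, Rabs_pos_eq
      by (apply Rlt_le, Rinv_0_lt_compat, Hm).
    apply Rlt_le; apply (Rmult_lt_reg_l (m k)); [apply Hm|].
    rewrite <- Rmult_assoc, Rinv_r, Rmult_1_l by apply Rgt_not_eq, Hm.
    eapply Rle_lt_trans; [apply supnorm_ge_abs; exact Hj|].
    specialize (Halpha k); fold (m k) in Halpha; lra. }
  destruct (bounded_vec_subseq r beta 1) as [phi [Hphi [b Hb]]];
    [intro k; rewrite Hbeta1; lra|].
  assert (Hb0 : forall i, (i < r)%nat -> b i = 0).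
  { apply LamMul_kernel_trivial; intros j Hj.
    apply (UL_sequence (fun k => LamMul r lam (beta (phi k)) j));
      [apply LamMul_cv; exact Hb|].
    apply Un_cv_dominated_inv_succ; intro k.
    eapply Rle_trans; [apply Hsmall; exact Hj|].
    apply Rinv_le_contravar; [pose proof (pos_INR k); lra|].
    apply Rplus_le_compat_r, le_INR, Hphi. }
  assert (Hb1 : supnorm r b = 1).
  { apply (UL_sequence (fun k => supnorm r (beta (phi k))));
      [apply supnorm_cv; exact Hb|].
    apply (Un_cv_ext (fun _ => 1)); [intro k; rewrite Hbeta1; reflexivity|].
    apply Un_cv_const. }
  assert (supnorm r b <= 0); [|lra].
  apply supnorm_lub; [lra|]; intros i Hi; rewrite Hb0 by exact Hi.
  rewrite Rabs_R0; lra.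
Qed.

Variables (V W : R).
Hypothesis HV : 0 < V.

Lemma lattice_distance_lower_bound (q : nat) : (0 < q)%nat ->
  exists d, 0 < d /\ forall (alpha : nat -> R) (a : nat -> Z),
    V <= supnorm n (LamMul r lam alpha) <= W ->
    d <= supnorm n (fun v => INR q * LamMul r lam alpha v - IZR (a v)).
Proof.
  intros Hq; apply NNPP; intro Hno.
  assert (Hbad : forall k, exists p : (nat -> R) * (nat -> Z),
    V <= supnorm n (LamMul r lam (fst p)) <= W /\
    supnorm n (fun v => INR q * LamMul r lam (fst p) v - IZR (snd p v)) < / (INR k + 1)).
  { intro k; apply NNPP; intro Hk; apply Hno.
    exists (/ (INR k + 1)); split;
      [apply Rinv_0_lt_compat; pose proof (pos_INR k); lra|].
    intros alpha a Hshell; apply Rnot_lt_le; intro Hlt.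
    apply Hk; exists (alpha, a); auto. }
  destruct (choice _ Hbad) as [f Hf].
  set (alpha k := fst (f k)); set (a k := snd (f k)).
  destruct LamMul_coercive as [c [Hc Hcoer]].
  destruct (bounded_vec_subseq r alpha (W / c)) as [phi [Hphi [b Hb]]].
  { intro k; apply (Rmult_le_reg_l c); [exact Hc|].
    replace (c * (W / c)) with W by (field; lra).
    eapply Rle_trans; [apply Hcoer | apply (Hf k)]. }
  assert (HLb : forall j, (j < n)%nat ->
    Un_cv (fun k => LamMul r lam (alpha (phi k)) j) (LamMul r lam b j))
    by (intros j Hj; apply LamMul_cv; exact Hb).
  assert (Hshell : V <= supnorm n (LamMul r lam b)).
  { apply (Rle_cv_lim (Un := fun _ => V)
                        (Vn := fun k => supnorm n (LamMul r lam (alpha (phi k)))));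
      [intro k; apply (Hf (phi k)) | apply Un_cv_const | apply supnorm_cv; exact HLb]. }
  apply (Hirr b).
  - apply NNPP; intro Hb0.
    assert (supnorm n (LamMul r lam b) <= 0); [|lra].
    apply supnorm_lub; [lra|]; intros j Hj.
    rewrite LamMul_zero, Rabs_R0; [lra|].
    intros i Hi; apply NNPP; intro Hbi; apply Hb0; exists i; auto.
  - intros j Hj.
    destruct (Un_cv_IZR_integer (fun k => a (phi k) j) (INR q * LamMul r lam b j))
      as [m Hm].
    { apply (Un_cv_ext (fun k => INR q * LamMul r lam (alpha (phi k)) j -
          (INR q * LamMul r lam (alpha (phi k)) j - IZR (a (phi k) j))));
        [intro k; ring|].
      rewrite <- Rminus_0_r; apply CV_minus;
        [apply (CV_mult (fun _ => INR q)); [apply Un_cv_const | apply HLb; exact Hj]|].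
      apply Un_cv_dominated_inv_succ; intro k.
      eapply Rle_trans;
        [apply (supnorm_ge_abs n (fun v => INR q * LamMul r lam (alpha (phi k)) v
                                          - IZR (a (phi k) v))); exact Hj|].
      apply Rlt_le; eapply Rlt_le_trans; [apply (Hf (phi k))|].
      apply Rinv_le_contravar; [pose proof (pos_INR k); lra|].
      apply Rplus_le_compat_r, le_INR, Hphi. }
    exists m, (Z.of_nat q); split; [lia|].
    rewrite <- INR_IZR_INZ, <- Hm; field; apply not_0_INR; lia.
Qed.

Lemma lattice_distance_lower_bound_upto (Q : nat) :
  exists d, 0 < d /\ forall q, (1 <= q <= Q)%nat ->
    forall (alpha : nat -> R) (a : nat -> Z),
    V <= supnorm n (LamMul r lam alpha) <= W ->
    d <= supnorm n (fun v => INR q * LamMul r lam alpha v - IZR (a v)).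
Proof.
  induction Q as [|Q [d1 [Hd1 HQ]]].
  - exists 1; split; [lra | intros; lia].
  - destruct (lattice_distance_lower_bound (S Q)) as [d2 [Hd2 HSQ]]; [lia|].
    exists (Rmin d1 d2); split; [apply Rmin_pos; assumption|].
    intros q Hq alpha a Hshell.
    destruct (Nat.eq_dec q (S Q)) as [->|Hne].
    + eapply Rle_trans; [apply Rmin_r | apply HSQ; exact Hshell].
    + eapply Rle_trans; [apply Rmin_l | apply HQ; [lia | exact Hshell]].
Qed.

End IrrationalForms.

Lemma prodR_unit_interval k f :
  (forall v, (v < k)%nat -> 0 < f v <= 1) -> 0 <= prodR k f <= 1.
Proof.
  induction k as [|k IH]; intros Hf; simpl; [lra|].
  destruct IH as [H0 H1]; [intros v Hv; apply Hf; lia|].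
  destruct (Hf k) as [Hk0 Hk1]; [lia|].
  split; [apply Rmult_le_pos; lra|].
  rewrite <- (Rmult_1_r 1); apply Rmult_le_compat; lra.
Qed.

Lemma prodR_le_factor k f v :
  (forall v, (v < k)%nat -> 0 < f v <= 1) -> (v < k)%nat -> prodR k f <= f v.
Proof.
  induction k as [|k IH]; intros Hf Hv; simpl; [lia|].
  destruct (prodR_unit_interval k f) as [H0 H1]; [intros w Hw; apply Hf; lia|].
  destruct (Hf k) as [Hk0 Hk1]; [lia|].
  destruct (Nat.eq_dec v k) as [->|Hne].
  - rewrite <- (Rmult_1_l (f k)) at 2; apply Rmult_le_compat_r; lra.
  - assert (prodR k f <= f v) by (apply IH; [intros w Hw; apply Hf | ]; lia).
    rewrite <- (Rmult_1_r (f v)); apply Rmult_le_compat; lra.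
Qed.

Lemma Fterm_le_factor n r lam alpha P q a v :
  0 <= P -> (1 <= q)%nat -> (v < n)%nat ->
  Fterm n r lam alpha P q a <=
  / (INR q + P * Rabs (INR q * LamMul r lam alpha v - IZR (a v))).
Proof.
  intros HP Hq Hv; unfold Fterm.
  set (dist w := Rabs (INR q * LamMul r lam alpha w - IZR (a w))).
  apply (prodR_le_factor n (fun w => / (INR q + P * dist w))); [|exact Hv].
  intros w _.
  assert (1 <= INR q) by (apply (le_INR 1); exact Hq).
  assert (0 <= P * dist w) by (apply Rmult_le_pos; [exact HP | apply Rabs_pos]).
  split; [apply Rinv_0_lt_compat; lra|].
  rewrite <- Rinv_1; apply Rinv_le_contravar; lra.
Qed.

Theorem mainTheorem7 (n r : nat) (lam : nat -> nat -> R)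
  (Hirr : forall alpha : nat -> R,
      (exists i, (i < r)%nat /\ alpha i <> 0) ->
      ~ (forall j, (j < n)%nat -> is_rational (LamMul r lam alpha j)))
  (V W : R) (HV : 0 < V) (HVW : V <= W) :
  forall eps : R, 0 < eps ->
  exists P0 : R, 1 <= P0 /\
    forall P : R, P0 <= P ->
    forall alpha : nat -> R,
      V <= supnorm n (LamMul r lam alpha) <= W ->
      F_le n r lam alpha P eps.
Proof.
  intros eps Heps.
  destruct (archimed_cor1 eps Heps) as [Q [HQ HQ0]].
  destruct (lattice_distance_lower_bound_upto n r lam Hirr V W HV Q) as [d [Hd Hdist]].
  exists (Rmax 1 (/ (eps * d))); split; [apply Rmax_l|].
  intros P HP alpha Hshell q a Hq.
  pose proof (Rmax_l 1 (/ (eps * d))); pose proof (Rmax_r 1 (/ (eps * d))).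
  destruct (le_lt_dec q Q) as [HqQ|HqQ].
  - destruct (supnorm_witness n _ d Hd (Hdist q (conj Hq HqQ) alpha a Hshell))
      as [v [Hv Hdv]].
    eapply Rle_trans; [apply (Fterm_le_factor _ _ _ _ _ _ _ v); auto; lra|].
    assert (HPd : / eps <= P * d).
    { replace (/ eps) with (/ (eps * d) * d) by (field; lra).
      apply Rmult_le_compat_r; lra. }
    assert (P * d <= P * Rabs (INR q * LamMul r lam alpha v - IZR (a v)))
      by (apply Rmult_le_compat_l; lra).
    pose proof (pos_INR q).
    rewrite <- (Rinv_inv eps); apply Rinv_le_contravar;
      [apply Rinv_0_lt_compat; exact Heps | lra].
  - assert (Hn : (0 < n)%nat)
      by (destruct n; [simpl in Hshell; lra | lia]).
    eapply Rle_trans; [apply (Fterm_le_factor _ _ _ _ _ _ _ 0%nat); auto; lra|].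
    assert (0 <= P * Rabs (INR q * LamMul r lam alpha 0 - IZR (a 0%nat)))
      by (apply Rmult_le_pos; [lra | apply Rabs_pos]).
    apply Rlt_le, Rle_lt_trans with (/ INR Q); [|exact HQ].
    apply Rinv_le_contravar; [apply lt_0_INR; exact HQ0|].
    apply lt_INR in HqQ; lra.
Qed.
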